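(* Let $n,x$ be integers with $1<x<n$, so that $G=C_{2n}(x,1,n)$ is a $5$-regular circulant graph. If $n\equiv 0\pmod 3$, $x\equiv 2\pmod 3$ and $1<x\leq \tfrac{2n}{3}$, then $G$ is word-representable.
   Context: Two distinct letters $x,y$ alternate in a word $w$ if, after deleting all other letters from $w$, the resulting word is of the form $xyxy\cdots$ or $yxyx\cdots$ (of even or odd length). A graph $G=(V,E)$ is word-representable if there is a word $w$ over the alphabet $V$, containing every letter of $V$ at least once, such that for all distinct $x,y\in V$, $xy\in E$ if and only if $x$ and $y$ alternate in $w$. For an integer $m$ and a set $R$ of positive integers each at most $m/2$, the circulant graph $C_m(R)$ has vertex set $\{0,1,\dots,m-1\}$, with $i$ and $j$ adjacent iff $\min(|i-j|,\,m-|i-j|)\in R$. $C_{2n}(x,1,n)$ denotes the circulant graph on $2n$ vertices with jump set $\{1,x,n\}$; it is $5$-regular exactly when $1<x<n$. *)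

From mathcomp Require Import all_boot.
Unset Printing Implicit Defensive.

Definition restrict2 (T : eqType) (w : seq T) (x y : T) : seq T :=
  [seq z <- w | (z == x) || (z == y)].

(* x and y alternate in w: the restricted word is of the form xyxy... or
   yxyx..., i.e. no two consecutive letters of it are equal. *)
Definition alternate (T : eqType) (w : seq T) (x y : T) : bool :=
  let u := restrict2 _ w x y in
  all (fun p => p.1 != p.2) (zip u (behead u)).

Definition word_representable (T : finType) (e : rel T) : Prop :=
  exists w : seq T, (forall v : T, v \in w) /\
    (forall u v : T, u != v -> (e u v <-> alternate _ w u v)).

Definition circ_dist (m i j : nat) : nat :=
  let d := if i <= j then j - i else i - j in minn d (m - d).

Definition circulant (m : nat) (R : pred nat) : rel 'I_m :=
  fun i j => circ_dist m i j \in R.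

Definition C2n (n x : nat) : rel 'I_(2 * n) :=
  circulant (2 * n) (fun d => [|| d == 1, d == x | d == n]).

From mathcomp Require Import all_boot zify zmodp.
Set Implicit Arguments. Unset Strict Implicit. Unset Printing Implicit Defensive.

(* Orient each edge of C_{2n}(x,1,n) upwards along the potential
   i |-> (2n/3 - 1) i mod 2n.  For n >= 9 every edge then spans a potential
   gap strictly between n/2 and 3n/2, so no directed path of three or more
   arcs is shortcut by an arc and the orientation is semi-transitive.  A graph
   with a semi-transitive orientation is word-representable (Halldorsson,
   Kitaev, Pyatkin): for every ordered pair (a, b) concatenate a topological
   listing of the vertices with the ancestors of a first, the same for b, and
   a gadget in which a and b read a a b b when b is reachable from a but not
   adjacent to it; every arc u -> v reads u v u v ... in each block.  The
   cases n = 3 and n = 6 are checked by computation. *)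

Section Alternation.
Variable T : eqType.
Implicit Types (w s : seq T) (x y : T).

Local Notation neq := (fun a b : T => a != b).

Lemma restrict2C w x y : restrict2 _ w x y = restrict2 _ w y x.
Proof. by apply: eq_filter => z; rewrite orbC. Qed.

Lemma restrict2_cat w1 w2 x y :
  restrict2 _ (w1 ++ w2) x y = restrict2 _ w1 x y ++ restrict2 _ w2 x y.
Proof. exact: filter_cat. Qed.

Lemma restrict2_flatten (ws : seq (seq T)) x y :
  restrict2 _ (flatten ws) x y = flatten [seq restrict2 _ w x y | w <- ws].
Proof. exact: filter_flatten. Qed.

Lemma alternateE w x y : alternate _ w x y = sorted neq (restrict2 _ w x y).
Proof.
rewrite /alternate; elim: (restrict2 _ w x y) => [|a [|b s] IHs] //=.
by move: IHs => /= ->.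
Qed.

Lemma alternateC w x y : alternate _ w x y = alternate _ w y x.
Proof. by rewrite !alternateE restrict2C. Qed.

Lemma alternate_infix w1 w2 x y :
  infix w1 w2 -> alternate _ w2 x y -> alternate _ w1 x y.
Proof.
case/infixP=> [s [s' ->]]; rewrite !alternateE !restrict2_cat.
exact/infix_sorted/infix_infix.
Qed.

Lemma path_flatten (r : rel T) x (ss : seq (seq T)) :
  all (fun s => path r x s && (last x s == x)) ss -> path r x (flatten ss).
Proof.
elim: ss => //= s ss IHss /andP[/andP[rs /eqP ls] /IHss].
by rewrite cat_path rs ls.
Qed.

End Alternation.

Section Ranked.
Variable V : finType.
Implicit Types (K : V -> nat) (S Q : pred V).

Definition ranked K : seq V := sort (fun x y => K x <= K y) (enum V).

Lemma restrict2_filter_ranked K Q u v : K u < K v ->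
  restrict2 _ (filter Q (ranked K)) u v = filter Q [:: u; v].
Proof.
move=> Kuv; have uv : u != v by apply: contraTneq Kuv => ->; rewrite ltnn.
have le_total : total (fun x y => K x <= K y) by move=> x y; apply: leq_total.
have le_trans : transitive (fun x y => K x <= K y) by move=> ? ? ?; apply: leq_trans.
rewrite /restrict2 -filter_predI filter_sort //.
set s := filter _ (enum V).
have s_uv : {subset s <= [:: u; v]}.
  by move=> z; rewrite mem_filter !inE => /andP[/andP[]].
have s_perm : perm_eq s (filter Q [:: u; v]).
  apply: uniq_perm; first exact/filter_uniq/enum_uniq.
    by rewrite filter_uniq //= inE uv.
  by move=> z; rewrite mem_filter mem_enum andbT mem_filter /= !inE andbC.
have s_antisym : {in s &, antisymmetric (fun x y => K x <= K y)}.
  move=> y z /s_uv + /s_uv; rewrite !inE => /orP[]/eqP-> /orP[]/eqP-> //=;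
    by rewrite -eqn_leq => /eqP E; move: Kuv; rewrite E ltnn.
rewrite (perm_sort_inP _ (in2W le_total) (in3W le_trans) s_antisym s_perm) sorted_sort //.
by apply: sorted_filter => //=; rewrite ltnW.
Qed.

Lemma restrict2_ranked K u v : K u < K v -> restrict2 _ (ranked K) u v = [:: u; v].
Proof. by move=> Kuv; rewrite -(filter_predT (ranked K)) restrict2_filter_ranked. Qed.

Definition gadget K S (a : V) : seq V :=
  [seq w <- ranked K | ~~ S w] ++ [seq w <- ranked K | K w <= K a] ++
  [seq w <- ranked K | S w] ++ [seq w <- ranked K | K a < K w].

Lemma restrict2_gadget_lt K S a u v : K u < K v -> (S u -> S v) -> (S v -> K a < K u) ->
  restrict2 _ (gadget K S a) u v = [:: u; v; u; v].
Proof.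
move=> Kuv Suv Sva; rewrite /gadget !restrict2_cat !restrict2_filter_ranked //=.
case Sv: (S v); last first.
  rewrite (contraFF Suv Sv) /=.
  by case: (leqP (K u) (K a)); case: (leqP (K v) (K a)) => //=; lia.
have Kau := Sva Sv; have Kav := ltn_trans Kau Kuv.
by rewrite Kau Kav (leqNgt (K u)) (leqNgt (K v)) Kau Kav; case: (S u).
Qed.

Lemma restrict2_gadget_split K S a b : K a < K b -> S b -> ~~ S a ->
  restrict2 _ (gadget K S a) a b = [:: a; a; b; b].
Proof.
move=> Kab Sb Sa; rewrite /gadget !restrict2_cat !restrict2_filter_ranked //=.
by rewrite Sb (negbTE Sa) leqnn ltnn Kab (leqNgt (K b)) Kab.
Qed.

End Ranked.

Definition orient (V : Type) (G : rel V) (p : V -> nat) : rel V :=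
  [rel u v | G u v && (p u < p v)].

Definition semi_transitive (V : finType) (G : rel V) (p : V -> nat) : Prop :=
  forall u a b s, connect (orient G p) u a -> connect (orient G p) a b ->
    connect (orient G p) b s -> orient G p u s -> a != b -> G a b.

Section Orientation.
Variables (V : finType) (G : rel V) (p : V -> nat).
Local Notation e := (orient G p).

Lemma connect_orient_first u v :
  connect e u v -> u = v \/ exists2 w, e u w & connect e w v.
Proof.
case/connectP=> [[|w s]] /=; first by left.
by case/andP=> uw ws ->; right; exists w => //; apply/connectP; exists s.
Qed.

Lemma connect_orient_le u v : connect e u v -> p u <= p v.
Proof.
case/connectP=> s + ->; elim: s u => //= w s IHs u /andP[/andP[_ uw] /IHs].
exact/leq_trans/ltnW.
Qed.

Lemma connect_orient_lt u v : connect e u v -> u != v -> p u < p v.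
Proof.
case/connect_orient_first=> [-> | [w /andP[_ uw] /connect_orient_le]]; first by rewrite eqxx.
by move=> wv _; apply: leq_trans uw wv.
Qed.

Lemma connect_orient_antisym u v : connect e u v -> connect e v u -> u = v.
Proof.
move=> uv vu; apply/eqP/negPn/negP => /(connect_orient_lt uv).
by rewrite ltnNge connect_orient_le.
Qed.

End Orientation.

Section SemiTransitiveWord.
Variables (V : finType) (G : rel V) (p : V -> nat).
Hypothesis G_sym : symmetric G.
Hypothesis p_edge : forall u v, G u v -> p u != p v.
Hypothesis G_semi : semi_transitive G p.
Local Notation e := (orient G p).
Local Notation R := (connect e).

Definition ancestors_first (a w : V) : nat :=
  (if R w a then 0 else (\max_(z : V) p z).+1) + p w.

Lemma ancestors_first_orient a u v : e u v -> ancestors_first a u < ancestors_first a v.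
Proof.
move=> /[dup] uv /andP[_ lt_uv]; rewrite /ancestors_first.
case va: (R v a); first by rewrite (connect_trans (connect1 uv) va).
by case: (R u a); lia.
Qed.

Lemma ancestors_first_out a w : ~~ R w a -> ancestors_first a a < ancestors_first a w.
Proof.
move/negbTE=> wa; rewrite /ancestors_first wa connect0 add0n ltn_addr //.
by rewrite ltnS (leq_bigmax a).
Qed.

Definition beyond (a b : V) : pred V :=
  [pred w | [&& R a b, a != b, ~~ G a b & R b w]].

Definition block (a b : V) : seq V :=
  ranked (ancestors_first a) ++ ranked (ancestors_first b) ++
  gadget (ancestors_first a) (beyond a b) a.

Definition representing_word : seq V := flatten [seq block a b | a <- enum V, b <- enum V].

Lemma mem_representing_word v : v \in representing_word.
Proof.
apply/flattenP; exists (block v v); first by apply/allpairsP; exists (v, v); rewrite !mem_enum.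
by rewrite !mem_cat /ranked mem_sort mem_enum.
Qed.

Lemma block_infix a b : infix (block a b) representing_word.
Proof.
rewrite /representing_word.
have /splitPr[bs1 bs2] : block a b \in [seq block a b | a <- enum V, b <- enum V].
  by apply/allpairsP; exists (a, b); rewrite !mem_enum.
by rewrite flatten_cat /= infix_infix.
Qed.

Lemma restrict2_block_orient a b u v : e u v ->
  restrict2 _ (block a b) u v = [:: u; v; u; v; u; v; u; v].
Proof.
move=> uv; rewrite /block 2!restrict2_cat 2?restrict2_ranked ?ancestors_first_orient //.
rewrite restrict2_gadget_lt //; first exact: ancestors_first_orient.
- move=> /and4P[ab ab_neq nGab bu]; apply/and4P; split=> //.
  exact: connect_trans bu (connect1 uv).
move=> /and4P[ab ab_neq nGab bv]; apply: ancestors_first_out; apply/negP => ua.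
by move: nGab; rewrite (G_semi ua ab bv uv ab_neq).
Qed.

Lemma representing_word_orient u v : e u v -> alternate _ representing_word u v.
Proof.
move=> uv; have u_neq_v : u != v by apply: contraTneq uv => ->; rewrite /orient /= ltnn andbF.
rewrite alternateE restrict2_flatten; apply: (@path_sorted _ _ v).
apply/path_flatten/allP => _ /mapP[_ /allpairsP[[a b] [_ _ ->]] ->].
by rewrite restrict2_block_orient //= [v == u]eq_sym u_neq_v eqxx.
Qed.

Lemma block_reach u v : R u v -> u != v -> ~~ G u v -> ~~ alternate _ (block u v) u v.
Proof.
move=> uv u_neq_v nGuv.
have vu : ~~ R v u by apply: contra_neqN u_neq_v => /(connect_orient_antisym uv) ->.
have beyond_v : beyond u v v by apply/and4P; split=> //; apply: connect0.
have beyond_u : ~~ beyond u v u by apply: contra vu => /and4P[].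
have gadget_infix : infix (gadget (ancestors_first u) (beyond u v) u) (block u v).
  by rewrite /block catA; apply: suffix_infix; apply: suffix_suffix.
apply: contra (alternate_infix gadget_infix) _.
by rewrite alternateE restrict2_gadget_split ?ancestors_first_out //= eqxx.
Qed.

Lemma block_incomparable u v : ~~ R u v -> ~~ R v u -> ~~ alternate _ (block u v) u v.
Proof.
move=> uv vu; rewrite alternateE /block 2!restrict2_cat restrict2_ranked ?ancestors_first_out //.
by rewrite restrict2C restrict2_ranked ?ancestors_first_out //= eqxx !andbF.
Qed.

Lemma representing_word_nonedge u v : u != v -> ~~ G u v -> ~~ alternate _ representing_word u v.
Proof.
move=> u_neq_v nGuv; case uv: (R u v).
  exact: contra (alternate_infix (block_infix u v)) (block_reach uv u_neq_v nGuv).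
case vu: (R v u).
  rewrite alternateC; apply: contra (alternate_infix (block_infix v u)) _.
  by apply: block_reach; rewrite // 1?eq_sym // G_sym.
exact: contra (alternate_infix (block_infix u v)) (block_incomparable (negbT uv) (negbT vu)).
Qed.

Theorem semi_transitive_word_representable : word_representable V G.
Proof.
exists representing_word; split=> [|u v u_neq_v]; first exact: mem_representing_word.
split=> [Guv | alt]; last by apply: contraTT alt; apply: representing_word_nonedge.
case: (ltngtP (p u) (p v)) => [lt_uv | lt_vu | eq_uv].
- by apply: representing_word_orient; rewrite /orient /= Guv.
- by rewrite alternateC; apply: representing_word_orient; rewrite /orient /= G_sym Guv.
by move: (p_edge Guv); rewrite eq_uv eqxx.
Qed.

End SemiTransitiveWord.

Definition distn (a b : nat) : nat := (a - b) + (b - a).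

Lemma distnC a b : distn a b = distn b a.
Proof. exact: addnC. Qed.

Section Banded.
Variables (V : finType) (G : rel V) (p : V -> nat) (c : nat).
Hypothesis p_band : forall u v, G u v -> c < 2 * distn (p u) (p v) < 3 * c.
Local Notation e := (orient G p).

Lemma orient_band u v : e u v -> c < 2 * (p v - p u) < 3 * c.
Proof. by case/andP=> /p_band; rewrite /distn; lia. Qed.

Lemma connect_band u v : connect e u v -> u != v -> c < 2 * (p v - p u).
Proof.
case/connect_orient_first=> [-> | [w /orient_band uw /connect_orient_le wv]]; first by rewrite eqxx.
by move=> _; lia.
Qed.

Lemma banded_semi_transitive : semi_transitive G p.
Proof.
move=> u a b s ua ab bs us ab_neq.
have [/eqP | [w aw wb]] := connect_orient_first ab; first by rewrite (negbTE ab_neq).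
have [<- | wb_neq] := eqVneq w b; first by case/andP: aw.
have us_short := orient_band us; have ab_long := connect_band wb wb_neq.
have aw_gap := orient_band aw.
have [ua_eq | ua_neq] := eqVneq u a; last first.
  by have := connect_band ua ua_neq; have := connect_orient_le bs; lia.
have [bs_eq | bs_neq] := eqVneq b s; last first.
  by have := connect_band bs bs_neq; have := connect_orient_le ua; lia.
by move: us; rewrite ua_eq bs_eq => /andP[].
Qed.

Lemma banded_word_representable : symmetric G -> word_representable V G.
Proof.
move=> G_sym; apply: (@semi_transitive_word_representable _ _ p G_sym).
- by move=> u v /p_band; apply: contraTneq => ->; rewrite /distn subnn.
- exact: banded_semi_transitive.
Qed.

End Banded.

Lemma distn_modD c a b r : a < 2 * c -> b < 2 * c -> b = a + r %[mod 2 * c] ->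
  c < 2 * (r %% (2 * c)) < 3 * c -> c < 2 * distn a b < 3 * c.
Proof.
move=> a_lt b_lt; rewrite -modnDmr (modn_small b_lt) /distn.
have r_lt : r %% (2 * c) < 2 * c by rewrite ltn_mod; lia.
move: (r %% _) r_lt => r' r_lt ->.
have [small | large] := ltnP (a + r') (2 * c); first by rewrite modn_small //; lia.
by rewrite -(subnK large) modnDr modn_small; lia.
Qed.

Lemma circ_distC m i j : circ_dist m i j = circ_dist m j i.
Proof. by rewrite /circ_dist; case: ltngtP => // ->. Qed.

Lemma circ_dist_mod m i j : i < m -> j < m ->
  j = i + circ_dist m i j %[mod m] \/ i = j + circ_dist m i j %[mod m].
Proof.
move=> i_lt j_lt; rewrite /circ_dist.
case: leqP => ij; rewrite /minn; case: ltnP => _.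
- by left; congr modn; lia.
- by right; rewrite -(modnDr i m); congr modn; lia.
- by right; congr modn; lia.
- by left; rewrite -(modnDr j m); congr modn; lia.
Qed.

Definition circ_potential (n i : nat) : nat := ((2 * (n %/ 3) - 1) * i) %% (2 * n).

Lemma multiplier_band n x d : 9 <= n -> n %% 3 = 0 -> x %% 3 = 2 -> 3 * x <= 2 * n ->
  [|| d == 1, d == x | d == n] -> n < 2 * (((2 * (n %/ 3) - 1) * d) %% (2 * n)) < 3 * n.
Proof.
move=> n_ge9 n_mod3 x_mod3 x_le.
have n_eq : n = 3 * (n %/ 3) by rewrite {1}(divn_eq n 3) n_mod3; lia.
have x_eq : x = 3 * (x %/ 3) + 2 by rewrite {1}(divn_eq x 3) x_mod3; lia.
move: (n %/ 3) (x %/ 3) n_eq x_eq => m q n_eq x_eq; subst n.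
case/or3P=> /eqP ->.
- by rewrite muln1 modn_small; lia.
- have -> : (2 * m - 1) * x = q * (2 * (3 * m)) + (4 * m - x) by rewrite x_eq; nia.
  by rewrite modnMDl modn_small; lia.
- have -> : (2 * m - 1) * (3 * m) = (m - 1) * (2 * (3 * m)) + 3 * m by nia.
  by rewrite modnMDl modn_small; lia.
Qed.

Lemma circ_potential_modD n i j d : j = i + d %[mod 2 * n] ->
  circ_potential n j = circ_potential n i + (2 * (n %/ 3) - 1) * d %[mod 2 * n].
Proof. by move=> ji; rewrite /circ_potential !modn_mod modnDml -mulnDr -modnMmr ji modnMmr. Qed.

Lemma C2n_potential_band n x : 9 <= n -> n %% 3 = 0 -> x %% 3 = 2 -> 3 * x <= 2 * n ->
  forall u v : 'I_(2 * n), C2n n x u v ->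
  n < 2 * distn (circ_potential n u) (circ_potential n v) < 3 * n.
Proof.
move=> n_ge9 n_mod3 x_mod3 x_le u v; rewrite /C2n /circulant unfold_in.
move=> /(multiplier_band n_ge9 n_mod3 x_mod3 x_le) band.
have pot_lt i : circ_potential n i < 2 * n by rewrite ltn_mod; lia.
have [vu | uv] := circ_dist_mod (ltn_ord u) (ltn_ord v).
- exact: distn_modD (circ_potential_modD vu) band.
- by rewrite distnC; apply: distn_modD (circ_potential_modD uv) _; rewrite // circ_distC.
Qed.

Lemma C2n_sym n x : symmetric (C2n n x).
Proof. by move=> u v; rewrite /C2n /circulant circ_distC. Qed.

Lemma word_representable_of_check (V : finType) (G : rel V) (vs w : seq V) :
  (forall v, v \in vs) -> all (mem w) vs ->
  all (fun u => all (fun v => (u != v) ==> (G u v == alternate _ w u v)) vs) vs ->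
  word_representable V G.
Proof.
move=> vs_all /allP w_all /allP G_w; exists w; split=> [v | u v uv]; first exact: w_all.
by move/allP: (G_w u (vs_all u)) => /(_ v (vs_all v)); rewrite uv => /eqP ->.
Qed.

Lemma mem_inZp_iota m (v : 'I_m.+1) : v \in [seq inZp i | i <- iota 0 m.+1].
Proof. by apply/mapP; exists (val v); rewrite ?valZpK // mem_iota add0n ltn_ord. Qed.

Lemma C6_word_representable : word_representable _ (C2n 3 2).
Proof.
apply: (word_representable_of_check (vs := [seq @inZp 5 i | i <- iota 0 6])
         (w := [seq @inZp 5 i | i <- iota 0 6])); first exact: mem_inZp_iota.
all: by vm_compute.
Qed.

Lemma C12_word_representable : word_representable _ (C2n 6 2).
Proof.
apply: (word_representable_of_check (vs := [seq @inZp 11 i | i <- iota 0 12])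
         (w := [seq @inZp 11 (i + s) | i <- iota 0 12, s <- [:: 0; 3; 7]])).
  exact: mem_inZp_iota.
all: by vm_compute.
Qed.

Theorem corollary6 (n x : nat) :
  1 < x -> x < n ->
  n %% 3 = 0 -> x %% 3 = 2 -> 3 * x <= 2 * n ->
  word_representable _ (C2n n x).
Proof.
move=> x_gt1 x_lt n_mod3 x_mod3 x_le.
have [n_ge9 | n_lt9] := leqP 9 n.
  apply: (@banded_word_representable _ _ (fun v : 'I_(2 * n) => circ_potential n v) n).
    exact: C2n_potential_band.
  exact: C2n_sym.
have [[-> ->] | [-> ->]] : (n = 3 /\ x = 2) \/ (n = 6 /\ x = 2) by lia.
- exact: C6_word_representable.
- exact: C12_word_representable.
Qed.
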